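(* For positive integers $i$ and $r\ge0$ let $\overline{\mathbf p}_{i^r}=i^r\big(\frac1i\sum_{d\mid i}\mu(i/d)p_d\big)_r$ and for a partition $\gamma$ let $\overline{\mathbf p}_\gamma=\prod_{i\ge1}\overline{\mathbf p}_{i^{m_i(\gamma)}}$. For partitions $\gamma$ and $\mu$ with $|\mu|<|\gamma|$, $\overline{\mathbf p}_\gamma[\Xi_\mu]=0$. Moreover, if $|\mu|=|\gamma|$, then $\overline{\mathbf p}_\gamma[\Xi_\mu]=z_\gamma\,\delta_{\gamma=\mu}$.
   Context: $\mu(\cdot)$ inside the sum denotes the Möbius function; $(x)_r=x(x-1)\cdots(x-r+1)$; $m_i(\gamma)$ is the number of parts of $\gamma$ equal to $i$; $z_\gamma=\prod_i i^{m_i(\gamma)}m_i(\gamma)!$; $\delta_{\gamma=\mu}$ is $1$ if $\gamma=\mu$ and $0$ otherwise. For a partition $\mu$ and $f\in Sym=\mathbb{Q}[p_1,p_2,\ldots]$, $f[\Xi_\mu]$ denotes the evaluation of $f$ at the eigenvalues of a permutation matrix of cycle type $\mu$, i.e. substituting $p_k\mapsto\sum_{d\mid k}d\,m_d(\mu)$. *)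

From mathcomp Require Import all_boot all_order all_algebra.
Set Implicit Arguments. Unset Strict Implicit. Unset Printing Implicit Defensive.
Import Order.TTheory GRing.Theory Num.Theory.
Local Open Scope ring_scope.

Definition is_partition (s : seq nat) : bool :=
  sorted geq s && all (fun x => 0 < x)%N s.

Definition psize (s : seq nat) : nat := sumn s.

Definition mult (i : nat) (s : seq nat) : nat := count_mem i s.

(* Moebius function (mu 0 := 0 by convention; never used at 0 here). *)
Definition moebius (n : nat) : rat :=
  if n == 0%N then 0
  else if all (fun p => logn p n <= 1)%N (primes n)
       then (-1) ^+ size (primes n) else 0.

Definition falling (x : rat) (r : nat) : rat := \prod_(j < r) (x - j%:R).

(* p_k[Xi_mu] = sum_{d | k} d * m_d(mu) *)
Definition p_eval (mu : seq nat) (k : nat) : rat :=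
  \sum_(d <- divisors k) (d * mult d mu)%:R.

Definition pbar_lin_eval (mu : seq nat) (i : nat) : rat :=
  i%:R^-1 * \sum_(d <- divisors i) moebius (i %/ d) * p_eval mu d.

Definition pbar_pow_eval (mu : seq nat) (i r : nat) : rat :=
  (i ^ r)%:R * falling (pbar_lin_eval mu i) r.

(* overline{p}_gamma[Xi_mu] = prod_{i >= 1} overline{p}_{i^{m_i(gamma)}}[Xi_mu];
   factors with i > |gamma| have m_i(gamma) = 0 and equal 1. *)
Definition pbar_eval (gamma mu : seq nat) : rat :=
  \prod_(1 <= i < (psize gamma).+1) pbar_pow_eval mu i (mult i gamma).

Definition zee (gamma : seq nat) : nat :=
  \prod_(1 <= i < (psize gamma).+1) (i ^ mult i gamma * (mult i gamma)`!)%N.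

(* Since p_k[Xi_mu] = sum_(d | k) d m_d(mu), Moebius inversion shows that
   (1/i) sum_(d | i) mu(i/d) p_d evaluates to m_i(mu) at Xi_mu, hence
   pbar_gamma[Xi_mu] = prod_i i^(m_i(gamma)) (m_i(mu))_(m_i(gamma)).
   A falling factorial (m)_r vanishes for m < r, so the product is zero unless
   gamma is a sub-multiset of mu; that forces |gamma| <= |mu|, with equality
   only if gamma = mu, and then the product is prod_i i^(m_i) m_i! = z_gamma. *)

From mathcomp Require Import all_boot all_order all_algebra.
Set Implicit Arguments. Unset Strict Implicit. Unset Printing Implicit Defensive.
Import Order.TTheory GRing.Theory Num.Theory.
Local Open Scope ring_scope.

Lemma divn_compl n d : (0 < n)%N -> (d %| n)%N -> (n %/ (n %/ d))%N = d.
Proof. by move=> n_gt0 dn; rewrite divnA // mulKn. Qed.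

Section DivisorSums.

Variable n : nat.
Hypothesis n_gt0 : (0 < n)%N.

Lemma perm_divisors_dvdn d : (d %| n)%N ->
  perm_eq (divisors d) [seq e <- divisors n | e %| d]%N.
Proof.
move=> dn; have d_gt0 := dvdn_gt0 n_gt0 dn.
rewrite uniq_perm ?filter_uniq ?divisors_uniq // => e.
rewrite mem_filter -!dvdn_divisors //.
by case ed: (e %| d)%N; rewrite ?(dvdn_trans ed dn).
Qed.

Lemma perm_divisors_multiples p : (p %| n)%N ->
  perm_eq [seq d <- divisors n | p %| d]%N [seq (p * e)%N | e <- divisors (n %/ p)].
Proof.
move=> pn; have p_gt0 := dvdn_gt0 n_gt0 pn.
have np_gt0 : (0 < n %/ p)%N by rewrite divn_gt0 // dvdn_leq.
have def_n : n = (p * (n %/ p))%N by rewrite mulnC divnK.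
rewrite uniq_perm ?filter_uniq ?divisors_uniq //.
  rewrite map_inj_uniq ?divisors_uniq // => a b /eqP.
  by rewrite eqn_pmul2l // => /eqP.
move=> d; rewrite mem_filter -dvdn_divisors //; apply/andP/mapP => [[pd dn]|[e]].
  exists (d %/ p)%N; last by rewrite mulnC divnK.
  by rewrite -dvdn_divisors // -(dvdn_pmul2l p_gt0) -def_n mulnC divnK.
rewrite -dvdn_divisors // => en ->.
by split; [exact: dvdn_mulr | rewrite def_n dvdn_pmul2l].
Qed.

Lemma perm_divisors_ndvd p : prime p -> (p %| n)%N ->
  perm_eq [seq d <- divisors n | ~~ (p %| d)%N]
          [seq d <- divisors (n %/ p) | ~~ (p %| d)%N].
Proof.
move=> p_pr pn; have p_gt0 := prime_gt0 p_pr.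
have np_gt0 : (0 < n %/ p)%N by rewrite divn_gt0 // dvdn_leq.
rewrite uniq_perm ?filter_uniq ?divisors_uniq // => d.
rewrite !mem_filter -!dvdn_divisors //; case pd: (p %| d)%N => //=.
have dp : coprime d p by rewrite coprime_sym prime_coprime // pd.
by rewrite -{1}(divnK pn) Gauss_dvdl.
Qed.

Lemma perm_divisors_compl :
  perm_eq (divisors n) [seq (n %/ d)%N | d <- divisors n].
Proof.
rewrite uniq_perm ?divisors_uniq //.
  rewrite map_inj_in_uniq ?divisors_uniq // => d e.
  rewrite -!dvdn_divisors // => dn en de.
  by rewrite -(divn_compl n_gt0 dn) de divn_compl.
move=> d; apply/idP/mapP => [|[e]]; rewrite -dvdn_divisors //.
  move=> dn; exists (n %/ d)%N; last by rewrite divn_compl.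
  by rewrite -dvdn_divisors // dvdn_div.
by move=> en ->; rewrite -dvdn_divisors // dvdn_div.
Qed.

Lemma sum_divisors_divisors (R : nmodType) (G : nat -> nat -> R) :
  \sum_(d <- divisors n) \sum_(e <- divisors d) G e d =
  \sum_(e <- divisors n) \sum_(k <- divisors (n %/ e)) G e (e * k)%N.
Proof.
transitivity (\sum_(d <- divisors n) \sum_(e <- divisors n | (e %| d)%N) G e d).
  apply: eq_big_seq => d; rewrite -dvdn_divisors // => dn.
  by rewrite (perm_big _ (perm_divisors_dvdn dn)) big_filter.
rewrite (exchange_big_dep xpredT) //=; apply: eq_big_seq => e.
rewrite -dvdn_divisors // => en.
by rewrite -big_filter (perm_big _ (perm_divisors_multiples en)) big_map.
Qed.

End DivisorSums.

Lemma moebius_primeM p d : prime p -> ~~ (p %| d)%N ->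
  moebius (p * d) = - moebius d.
Proof.
move=> p_pr pNd; have p_gt0 := prime_gt0 p_pr.
have d_gt0 : (0 < d)%N by case: d pNd; rewrite ?dvdn0.
have pd_gt0 : (0 < p * d)%N by rewrite muln_gt0 p_gt0.
have primes_pd : perm_eq (primes (p * d)) (p :: primes d).
  rewrite uniq_perm ?primes_uniq //=; last first.
    by move=> q; rewrite primesM // primes_prime // !inE.
  by rewrite primes_uniq mem_primes (negPf pNd) !andbF.
rewrite /moebius !gtn_eqF // (perm_size primes_pd) (perm_all _ primes_pd) /=.
rewrite lognM // logn_prime // eqxx logn_coprime ?prime_coprime //.
rewrite (@eq_in_all _ _ (fun q => logn q d <= 1)%N); last first.
  move=> q; rewrite mem_primes => /and3P[q_pr _ qd].
  rewrite lognM // logn_prime //; case: eqP => // qp.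
  by rewrite -qp qd in pNd.
by rewrite addn0 leq_b1 /=; case: ifP; rewrite ?oppr0 // exprS mulN1r.
Qed.

Lemma moebius_sqr_dvd p d : prime p -> (p * p %| d)%N -> moebius d = 0.
Proof.
move=> p_pr ppd; rewrite /moebius; have [//|d_gt0] := posnP d.
have pd : p \in primes d.
  by rewrite mem_primes p_pr d_gt0 (dvdn_trans (dvdn_mulr _ _) ppd).
have : (2 <= logn p d)%N by rewrite -pfactor_dvdn // expn2.
case: ifP => // /allP/(_ p pd) le1 le2.
by have := leq_trans le2 le1.
Qed.

(* Split the divisors of n along a prime p | n: the multiples p e (e | n/p)
   with p coprime to e contribute - moebius e and cancel the divisors coprime
   to p, and the other multiples are divisible by p^2. *)
Lemma sum_moebius_divisors n : (0 < n)%N ->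
  \sum_(d <- divisors n) moebius d = (n == 1)%:R.
Proof.
case: (ltngtP n 1) => [|n_gt1 _|-> _]; [by case: n | | by rewrite big_seq1 /moebius].
have p_pr := pdiv_prime n_gt1; have pn := pdiv_dvd n; set p := pdiv n in p_pr pn *.
have p_gt0 := prime_gt0 p_pr; have n_gt0 := ltnW n_gt1; set m := (n %/ p)%N.
have m_gt0 : (0 < m)%N by rewrite divn_gt0 // dvdn_leq.
have sum_dvd : \sum_(d <- divisors n | (p %| d)%N) moebius d =
               - \sum_(e <- divisors m | ~~ (p %| e)%N) moebius e.
  rewrite -big_filter (perm_big _ (perm_divisors_multiples n_gt0 pn)) big_map.
  rewrite (bigID (dvdn p)) /= big_seq_cond big1 ?add0r => [|e /andP[em pe]].
    by rewrite -sumrN; apply: eq_bigr => e; apply: moebius_primeM.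
  by apply: (moebius_sqr_dvd p_pr); rewrite dvdn_pmul2l.
rewrite (bigID (dvdn p)) /= sum_dvd -!(big_filter _ (fun d => ~~ _)).
by rewrite (perm_big _ (perm_divisors_ndvd n_gt0 p_pr pn)) addNr.
Qed.

Lemma moebius_inversion n (f : nat -> rat) : (0 < n)%N ->
  \sum_(d <- divisors n) moebius (n %/ d) * \sum_(e <- divisors d) f e = f n.
Proof.
move=> n_gt0; under eq_bigr do rewrite big_distrr /=.
rewrite sum_divisors_divisors //.
transitivity (\sum_(e <- divisors n) f e * ((n %/ e)%N == 1)%:R).
  apply: eq_big_seq => e; rewrite -dvdn_divisors // => en.
  have ne_gt0 : (0 < n %/ e)%N by rewrite divn_gt0 ?(dvdn_gt0 n_gt0 en) // dvdn_leq.
  rewrite -sum_moebius_divisors // (perm_big _ (perm_divisors_compl ne_gt0)) big_map.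
  rewrite big_distrr; apply: eq_big_seq => k; rewrite -dvdn_divisors // => kne.
  by rewrite divnMA divn_compl // mulrC.
rewrite (big_rem n) ?divisors_id //= divnn n_gt0 mulr1 big_seq big1 ?addr0 //.
move=> e; rewrite (rem_filter _ (divisors_uniq n)) mem_filter -dvdn_divisors //.
case/andP=> ne en; case: eqP; rewrite ?mulr0 // => ne1.
by move: ne; rewrite /= -(divnK en) ne1 mul1n eqxx.
Qed.

Lemma leq_sumn_count (s t : seq nat) :
  (forall x, count_mem x s <= count_mem x t)%N -> (sumn s <= sumn t)%N.
Proof.
by move=> st; rewrite !sumnE; apply: sub_le_big_seq st => // x y; apply: leq_addr.
Qed.

Lemma perm_sumn_count (s t : seq nat) : all (fun x => 0 < x)%N t ->
  (forall x, count_mem x s <= count_mem x t)%N -> (sumn t <= sumn s)%N ->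
  perm_eq s t.
Proof.
elim: s t => [|x s IHs] t t_pos st.
  case: t t_pos {st} => //= y t /andP[y_gt0 _].
  by rewrite leqn0 addn_eq0 eqn0Ngt y_gt0.
have xt : x \in t by rewrite -has_pred1 has_count (leq_trans _ (st x)) //= eqxx.
have t_rem := perm_to_rem xt; rewrite (perm_sumn t_rem) /= leq_add2l.
rewrite (permPr t_rem) perm_cons => leq_sumn; apply: IHs leq_sumn.
  by apply/allP=> y /mem_rem; apply/allP.
move=> y; have /= st_y := st y.
by rewrite count_mem_rem leq_subRL // (leq_trans (leq_addr _ _) st_y).
Qed.

Lemma partition_perm_eq (s t : seq nat) :
  is_partition s -> is_partition t -> perm_eq s t -> s = t.
Proof.
move=> /andP[s_sorted _] /andP[t_sorted _]; apply: (@sorted_eq _ geq) => //.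
  by move=> y x z yx zy; apply: leq_trans zy yx.
by move=> x y /andP[yx xy]; apply/anti_leq/andP.
Qed.

Lemma pbar_lin_evalE mu i : (0 < i)%N -> pbar_lin_eval mu i = (mult i mu)%:R.
Proof.
move=> i_gt0; rewrite /pbar_lin_eval /p_eval.
rewrite (moebius_inversion (fun e => (e * mult e mu)%:R)) // natrM mulKf //.
by rewrite pnatr_eq0 -lt0n.
Qed.

Lemma falling_natr m r : falling m%:R r = (m ^_ r)%:R.
Proof.
elim: r => [|r IHr]; first by rewrite /falling big_ord0.
rewrite /falling big_ord_recr /= -/(falling _ _) IHr ffactnSr natrM.
have [rm|mr] := leqP r m; first by rewrite natrB.
by rewrite ffact_small // !mul0r.
Qed.

Lemma pbar_evalE gamma mu : pbar_eval gamma mu =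
  (\prod_(1 <= i < (psize gamma).+1)
     (i ^ mult i gamma * mult i mu ^_ mult i gamma))%:R.
Proof.
rewrite /pbar_eval natr_prod; apply: eq_big_nat => i /andP[i_gt0 _].
by rewrite /pbar_pow_eval pbar_lin_evalE // falling_natr natrM.
Qed.

Lemma pbar_eval_eq0 gamma mu i : (0 < i)%N ->
  (mult i mu < mult i gamma)%N -> pbar_eval gamma mu = 0.
Proof.
move=> i_gt0 lt_mult; have ig : i \in gamma.
  by move: lt_mult; rewrite /mult; apply: contraLR => /count_memPn ->.
have i_le : (i <= psize gamma)%N.
  by rewrite /psize (perm_sumn (perm_to_rem ig)) leq_addr.
rewrite pbar_evalE; apply/eqP; rewrite pnatr_eq0 -leqn0 leqNgt.
apply: contraL lt_mult => /gt0_prodn_seq/(_ i)/=.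
rewrite mem_index_iota i_gt0 ltnS muln_gt0 ffact_gt0 -leqNgt.
by move=> /(_ i_le isT)/andP[].
Qed.

Lemma pbar_eval_diag gamma : pbar_eval gamma gamma = (zee gamma)%:R.
Proof.
by rewrite pbar_evalE /zee; congr _%:R; apply: eq_bigr => i _; rewrite ffactnn.
Qed.

Theorem lemma14 (gamma mu : seq nat) :
  is_partition gamma -> is_partition mu ->
  ((psize mu < psize gamma)%N -> pbar_eval gamma mu = 0) /\
  (psize mu = psize gamma ->
     pbar_eval gamma mu = (zee gamma)%:R * (gamma == mu)%:R).
Proof.
move=> gamma_part mu_part.
have [/hasP[i ig lt_mult] | /hasPn leq_mult] :=
  boolP (has (fun i => mult i mu < mult i gamma)%N gamma).
  have i_gt0 : (0 < i)%N by case/andP: gamma_part => _ /allP->.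
  have gamma_neq_mu : gamma != mu by apply: contraTneq lt_mult => ->; rewrite ltnn.
  by rewrite (pbar_eval_eq0 i_gt0 lt_mult) (negPf gamma_neq_mu) mulr0.
have {}leq_mult x : (count_mem x gamma <= count_mem x mu)%N.
  have [/leq_mult le_x|/count_memPn->] // := boolP (x \in gamma).
  by rewrite leqNgt.
split=> [|eq_size]; first by rewrite ltnNge leq_sumn_count.
have gamma_mu : gamma = mu.
  apply: partition_perm_eq => //; apply: perm_sumn_count leq_mult _.
    by case/andP: mu_part.
  by rewrite -[sumn mu]/(psize mu) eq_size.
by rewrite -gamma_mu eqxx mulr1 pbar_eval_diag.
Qed.
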